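(* Let $G$ be the fundamental solution of the wave or heat equation and $T>0$. For any $\alpha\in(-1,1)$ and any $h\in\mathbb{R}$, $$\int_0^T\int_{\mathbb{R}}(1-\cos(\xi h))|\mathcal{F}G_t(\xi)|^2|\xi|^{\alpha}d\xi\,dt\le\begin{cases}CT|h|^{1-\alpha}&\text{wave equation},\\ C|h|^{1-\alpha}&\text{heat equation},\end{cases}$$ where $C=\int_{\mathbb{R}}(1-\cos\eta)|\eta|^{\alpha-2}d\eta$.
   Context: Wave: $\mathcal{F}G_t(\xi)=\sin(t|\xi|)/|\xi|$. Heat: $\mathcal{F}G_t(\xi)=e^{-t|\xi|^2/2}$. *)

From mathcomp Require Import all_boot all_order all_algebra.
From mathcomp Require Import all_classical all_reals all_analysis.
Set Implicit Arguments. Unset Strict Implicit. Unset Printing Implicit Defensive.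
Import Order.TTheory GRing.Theory Num.Theory.
Local Open Scope ring_scope.

(* Fourier transform (in space, dimension 1) of the fundamental solution G_t. *)
Inductive equation := Wave | Heat.

Definition FG {R : realType} (e : equation) (t xi : R) : R :=
  match e with
  | Wave => sin (t * `|xi|) / `|xi|
  | Heat => expR (- (t * `|xi| ^+ 2) / 2)
  end.

From mathcomp Require Import all_boot all_order all_algebra.
From mathcomp Require Import all_classical all_reals all_analysis measurable_realfun.
From mathcomp Require Import ring lra.
Import Order.TTheory GRing.Theory Num.Theory.
Local Open Scope classical_set_scope.
Local Open Scope ring_scope.

(* Substituting eta = |h| xi (Lebesgue measure scales by |h| under dilation)
   gives  int (1 - cos (xi h)) |xi|^(alpha-2) dxi = |h|^(1-alpha) C.
   After exchanging the t- and xi-integrals (Tonelli), it therefore suffices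
   to bound the time integral of |F G_t(xi)|^2 by k |xi|^-2: for the wave
   equation |sin (t |xi|) / |xi||^2 <= |xi|^-2 gives k = T, and for the heat
   equation int_0^T exp (- t xi^2) dt <= xi^-2 gives k = 1. *)

Section lebesgue_dilation.
Context {R : realType} {c : R} (c_gt0 : 0 < c).
Local Notation mu := (@lebesgue_measure R).

Let dilation (x : R) : measurableTypeR R := c * x.

Let measurable_dilation : measurable_fun setT dilation.
Proof. exact: measurable_funM. Qed.

(* The measure instance of a pushforward depends on the measurability proof,
   hence cannot be inferred and is named explicitly. *)
Let dilated : {measure set (measurableTypeR R) -> \bar R} :=
  @measure_function_pushforward__canonical__measure_function_Measure
    _ _ _ _ _ mu dilation measurable_dilation.

Let c_nng := NngNum (ltW c_gt0).

Let lebesgue_measure_dilated (A : set R) : measurable A ->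
  mu A = mscale c_nng dilated A.
Proof.
move=> mA.
apply: (@lebesgue_measure_unique _ (mscale c_nng dilated)) => // _ [[a b] _ <-].
rewrite /= /mscale /= /pushforward.
have -> : dilation @^-1` `]a, b]%classic = `]a / c, b / c]%classic.
  apply/seteqP; split => x;
    by rewrite /= !in_itv /= ltr_pdivrMr // ler_pdivlMr // ![_ * c]mulrC.
rewrite !lebesgue_measure_itv /= !lte_fin ltr_pM2r ?invr_gt0 //.
case: ifP => _; last by rewrite mule0.
by rewrite -EFinD -EFinM -mulrBl mulrCA divff ?mulr1 ?gt_eqF.
Qed.

Lemma ge0_integral_dilation (g : R -> \bar R) :
  measurable_fun setT g -> (forall x, 0 <= g x)%E ->
  (\int[mu]_x (g (c * x)%R * c%:E) = \int[mu]_x g x)%E.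
Proof.
move=> mg g_ge0.
rewrite [RHS](eq_measure_integral (mscale c_nng dilated)); last first.
  by move=> A mA _; exact: lebesgue_measure_dilated.
rewrite ge0_integral_mscale //=.
rewrite ge0_integral_pushforward //.
rewrite preimage_setT -ge0_integralZl_EFin ?(ltW c_gt0) //.
- by apply: eq_integral => x _; rewrite muleC.
- by move=> x _; exact: g_ge0.
- exact: measurableT_comp.
Qed.
End lebesgue_dilation.

Lemma measurable_norm_powR {R : realType} (p : R) :
  measurable_fun setT (fun x : R => `|x| `^ p).
Proof. exact: (measurableT_comp (f := @powR R ^~ p) (measurable_powR p)). Qed.

Lemma measurable_one_sub_cos_mulr {R : realType} (h : R) :
  measurable_fun setT (fun x : R => 1 - cos (x * h)).
Proof.
apply: measurable_funB => //.
apply: (measurableT_comp (f := cos) (g := fun x : R => x * h)).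
  by apply: continuous_measurable_fun; exact: continuous_cos.
exact: measurable_funM.
Qed.

Lemma powR_norm_sub2 {R : realType} (x a : R) :
  x != 0 -> `|x| `^ (a - 2) = `|x| `^ a * x ^- 2.
Proof.
move=> x0; rewrite powRB ?normr_eq0 ?x0 ?implybT //.
by rewrite (powR_mulrn 2) // real_normK ?num_real.
Qed.

Lemma integral_expRN_itv0c {R : realType} (a T : R) : 0 < a -> 0 < T ->
  (\int[lebesgue_measure]_(t in `[0%R, T]) (expR (- a * t))%:E =
   (a^-1 * (1 - expR (- a * T)))%:E)%E.
Proof.
move=> a_gt0 T_gt0.
transitivity
  (a^-1%:E * \int[lebesgue_measure]_(t in `[0%R, T]) (exponential_pdf a t)%:E)%E.
  rewrite -ge0_integralZl_EFin ?invr_ge0 ?(ltW a_gt0) //.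
  - apply: eq_integral => t; rewrite inE /= in_itv /= => /andP[t_ge0 _].
    by rewrite exponential_pdfE // -EFinM mulrA mulVf ?gt_eqF ?mul1r.
  - by move=> t _; rewrite lee_fin exponential_pdf_ge0 ?(ltW a_gt0).
  - by apply/measurable_funTS/measurable_EFinP; exact: measurable_exponential_pdf.
have := exponential_prob_itv0c a T_gt0; rewrite /exponential_prob => ->.
by rewrite -EFinB -EFinM.
Qed.

Section fubini_tonelli_restrict.
Local Open Scope ereal_scope.
Context d1 d2 (T1 : measurableType d1) (T2 : measurableType d2) (R : realType).
Variables (m1 : {sigma_finite_measure set T1 -> \bar R})
  (m2 : {sigma_finite_measure set T2 -> \bar R}).
Variables (D : set T1) (mD : measurable D) (f : T1 * T2 -> \bar R).
Hypotheses (mf : measurable_fun setT f) (f_ge0 : forall z, 0 <= f z).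

Let fD := f \_ (D `*` setT).

Let measurable_fD : measurable_fun setT fD.
Proof.
by apply/(measurable_restrictT f (measurableX mD measurableT)); exact: measurable_funTS.
Qed.

Let fD_ge0 z : 0 <= fD z.
Proof. by apply: erestrict_ge0 => ? _; exact: f_ge0. Qed.

Let fDE x y : fD (x, y) = if x \in D then f (x, y) else 0.
Proof. by rewrite /fD patchE in_setX in_setT andbT. Qed.

Let integral_restrictE y :
  \int[m1]_(x in D) f (x, y) = \int[m1]_x fD (x, y).
Proof.
by rewrite integral_mkcond; apply: eq_integral => x _; rewrite patchE fDE.
Qed.

Lemma measurable_fun_fubini_tonelli_restrict_G :
  measurable_fun setT (fun y => \int[m1]_(x in D) f (x, y)).
Proof.
rewrite (_ : (fun y => _) = fubini_G m1 fD); last first.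
  by apply/funext => y; exact: integral_restrictE.
exact: measurable_fun_fubini_tonelli_G.
Qed.

Lemma fubini_tonelli_restrict :
  \int[m1]_(x in D) \int[m2]_y f (x, y) = \int[m2]_y \int[m1]_(x in D) f (x, y).
Proof.
under [RHS]eq_integral do rewrite integral_restrictE.
rewrite -(fubini_tonelli fD) // integral_mkcond; apply: eq_integral => x _.
rewrite patchE; case: ifPn => xD.
  by apply: eq_integral => y _; rewrite fDE xD.
by rewrite integral0_eq // => y _; rewrite fDE (negbTE xD).
Qed.
End fubini_tonelli_restrict.

Definition cos_kernel {R : realType} (alpha h xi : R) : R :=
  (1 - cos (xi * h)) * `|xi| `^ (alpha - 2).

Section cos_kernel.
Context {R : realType} (alpha : R).
Local Notation mu := (@lebesgue_measure R).

Lemma cos_kernel_ge0 h xi : 0 <= cos_kernel alpha h xi.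
Proof. by rewrite mulr_ge0 ?powR_ge0 // subr_ge0 cos_le1. Qed.

Lemma measurable_cos_kernel h : measurable_fun setT (cos_kernel alpha h).
Proof.
exact: measurable_funM (measurable_one_sub_cos_mulr h) (measurable_norm_powR _).
Qed.

Lemma cos_kernel_dilation h xi : h != 0 ->
  `|h| `^ (1 - alpha) * (cos_kernel alpha 1 (`|h| * xi) * `|h|) =
  cos_kernel alpha h xi.
Proof.
move=> h0; have habs_gt0 : 0 < `|h| by rewrite normr_gt0.
have cos_abs : cos (`|h| * xi * 1) = cos (xi * h).
  rewrite mulr1 mulrC.
  by case: (ltrP h 0) => [/ltr0_norm|/ger0_norm] ->; rewrite ?mulrN ?cosN.
have powR_cancel : `|h| `^ (1 - alpha) * `|h| `^ (alpha - 2) * `|h| = 1.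
  rewrite -powRD; last by rewrite (gt_eqF habs_gt0) implybT.
  rewrite (_ : 1 - alpha + (alpha - 2) = -1); last by lra.
  by rewrite powR_inv1 ?mulVf ?gt_eqF ?ltW.
rewrite /cos_kernel cos_abs normrM normr_id powRM //.
transitivity (`|h| `^ (1 - alpha) * `|h| `^ (alpha - 2) * `|h| *
  ((1 - cos (xi * h)) * `|xi| `^ (alpha - 2))); first by ring.
by rewrite powR_cancel mul1r.
Qed.

Lemma integral_cos_kernel_dilation h : alpha < 1 ->
  (\int[mu]_xi (cos_kernel alpha h xi)%:E =
   (`|h| `^ (1 - alpha))%:E * \int[mu]_eta (cos_kernel alpha 1 eta)%:E)%E.
Proof.
move=> alpha_lt1; have [->|h0] := eqVneq h 0.
  (* [alpha < 1] makes [0 `^ (1 - alpha) = 0]. *)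
  rewrite normr0 powR0 ?mul0e; last by rewrite subr_eq0 gt_eqF.
  by apply: integral0_eq => xi _; rewrite /cos_kernel mulr0 cos0 subrr mul0r.
have habs_gt0 : 0 < `|h| by rewrite normr_gt0.
have mkernel1 : measurable_fun setT (fun x => (cos_kernel alpha 1 x)%:E).
  by apply/measurable_EFinP; exact: measurable_cos_kernel.
rewrite -(ge0_integral_dilation habs_gt0 _ mkernel1); last first.
  by move=> x; rewrite lee_fin cos_kernel_ge0.
rewrite -ge0_integralZl_EFin ?powR_ge0 //.
- by apply: eq_integral => xi _; rewrite -!EFinM cos_kernel_dilation.
- by move=> xi _; rewrite -EFinM lee_fin mulr_ge0 ?cos_kernel_ge0 ?ltW.
- apply/measurable_EFinP/measurable_funM => //.
  exact: measurableT_comp (measurable_cos_kernel 1) _.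
Qed.
End cos_kernel.

Section fundamental_solution.
Context {R : realType}.
Local Notation mu := (@lebesgue_measure R).

Lemma FG_wave_sqr_le (t xi : R) : `|FG Wave t xi| ^+ 2 <= xi ^- 2.
Proof.
rewrite /FG normrM normfV normr_id exprMn exprVn [`|xi| ^+ 2]real_normK ?num_real //.
by apply: ler_piMl; [rewrite invr_ge0 sqr_ge0|exact: exprn_ile1 (sin_max _)].
Qed.

Lemma FG_heat_sqr (t xi : R) : `|FG Heat t xi| ^+ 2 = expR (- xi ^+ 2 * t).
Proof.
rewrite /FG ger0_norm ?expR_ge0 // -expRM_natl real_normK ?num_real //.
by congr expR; field.
Qed.

Lemma measurable_FG (e : equation) :
  measurable_fun setT (fun p : R * R => FG e p.1 p.2).
Proof.
have mnorm2 : measurable_fun setT (fun p : R * R => `|p.2|).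
  apply: (measurableT_comp (f := @Num.norm R R)); first exact: normr_measurable.
  exact: measurable_snd.
case: e => /=.
- rewrite (_ : (fun p => _) = fun p : R * R => sin (p.1 * `|p.2|) * `|p.2| `^ (-1)).
    apply: measurable_funM.
      apply: (measurableT_comp (f := sin)).
        by apply: continuous_measurable_fun; exact: continuous_sin.
      exact: measurable_funM measurable_fst mnorm2.
    exact: measurableT_comp (measurable_norm_powR _) measurable_snd.
  by apply/funext => p; rewrite powR_inv1.
- apply: (measurableT_comp (f := expR)
    (g := fun p : R * R => - (p.1 * `|p.2| ^+ 2) / 2)); first exact: measurable_expR.
  apply: measurable_funM => //; apply: measurable_funN.
  exact: measurable_funM measurable_fst (measurable_funX _ mnorm2).
Qed.

Lemma measurable_FG_sqr_time (e : equation) (xi : R) :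
  measurable_fun setT (fun t => (`|FG e t xi| ^+ 2)%:E).
Proof.
apply/measurable_EFinP/measurable_funX.
apply: (measurableT_comp (f := @Num.norm R R)); first exact: normr_measurable.
exact: measurableT_comp (measurable_FG e) (pair2_measurable xi).
Qed.

Lemma integral_FG_wave_sqr_le (T xi : R) : 0 < T ->
  (\int[mu]_(t in `[0%R, T]) (`|FG Wave t xi| ^+ 2)%:E <= (T * xi ^- 2)%:E)%E.
Proof.
move=> T_gt0.
apply: (@le_trans _ _ (\int[mu]_(t in `[0%R, T]) (xi ^- 2)%:E)%E).
  apply: ge0_le_integral => //.
  - exact: measurable_funTS (measurable_FG_sqr_time _ _).
  - by move=> t _; rewrite lee_fin FG_wave_sqr_le.
rewrite integral_cst //= lebesgue_measure_itv /= lte_fin T_gt0 oppr0 adde0.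
by rewrite -EFinM mulrC.
Qed.

Lemma integral_FG_heat_sqr_le (T xi : R) : 0 < T -> xi != 0 ->
  (\int[mu]_(t in `[0%R, T]) (`|FG Heat t xi| ^+ 2)%:E <= (xi ^- 2)%:E)%E.
Proof.
move=> T_gt0 xi0; have xi2_gt0 : 0 < xi ^+ 2 by rewrite exprn_even_gt0.
under eq_integral do rewrite FG_heat_sqr.
rewrite integral_expRN_itv0c // lee_fin.
by apply: ler_piMr; [rewrite invr_ge0 ltW|rewrite gerBl expR_ge0].
Qed.
End fundamental_solution.

Section FG_increment.
Context {R : realType} (alpha h T : R).
Local Notation mu := (@lebesgue_measure R).

Lemma integral_FG_increment_le (e : equation) (k : R) : 0 <= k ->
  (forall xi, xi != 0 ->
    (\int[mu]_(t in `[0%R, T]) (`|FG e t xi| ^+ 2)%:E <= (k * xi ^- 2)%:E)%E) ->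
  (\int[mu]_(t in `[0%R, T]) \int[mu]_(xi in [set: R])
     ((1 - cos (xi * h)) * `|FG e t xi| ^+ 2 * `|xi| `^ alpha)%:E <=
   k%:E * \int[mu]_xi (cos_kernel alpha h xi)%:E)%E.
Proof.
move=> k_ge0 FG_time_le.
pose F (p : R * R) := ((1 - cos (p.2 * h)) * `|FG e p.1 p.2| ^+ 2 * `|p.2| `^ alpha)%:E.
have mF : measurable_fun setT F.
  apply/measurable_EFinP; apply: measurable_funM; first apply: measurable_funM.
  - exact: measurableT_comp (measurable_one_sub_cos_mulr h) measurable_snd.
  - apply/measurable_funX; apply: (measurableT_comp (f := @Num.norm R R)).
      exact: normr_measurable.
    exact: measurable_FG.
  - exact: measurableT_comp (measurable_norm_powR alpha) measurable_snd.
have F_ge0 p : (0 <= F p)%E.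
  by rewrite lee_fin !mulr_ge0 ?powR_ge0 ?sqr_ge0 // subr_ge0 cos_le1.
rewrite (@fubini_tonelli_restrict _ _ (measurableTypeR R) (measurableTypeR R) R
  mu mu _ (measurable_itv `[0%R, T]) F mF F_ge0).
rewrite -ge0_integralZl_EFin //; last 2 first.
- by move=> xi _; rewrite lee_fin cos_kernel_ge0.
- by apply/measurable_EFinP; exact: measurable_cos_kernel.
apply: ge0_le_integral => //.
- by move=> xi _; apply: integral_ge0 => t _; exact: F_ge0.
- exact: measurable_fun_fubini_tonelli_restrict_G.
- apply/measurable_EFinP/measurable_funM => //; exact: measurable_cos_kernel.
move=> xi _; rewrite /F /=; have [->|xi0] := eqVneq xi 0.
  rewrite integral0_eq; first by rewrite mule_ge0 // lee_fin cos_kernel_ge0.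
  by move=> t _; rewrite mul0r cos0 subrr !mul0r.
under eq_integral do rewrite mulrAC EFinM.
rewrite ge0_integralZl_EFin //;
  last exact: measurable_funTS (measurable_FG_sqr_time _ _).
apply: le_trans (lee_wpmul2l _ (FG_time_le xi xi0)) _.
  by rewrite lee_fin mulr_ge0 ?powR_ge0 // subr_ge0 cos_le1.
rewrite -!EFinM lee_fin /cos_kernel powR_norm_sub2 //.
by rewrite mulrCA !mulrA.
Qed.
End FG_increment.

Theorem lemma3p4 (R : realType) (T alpha h : R) :
  0 < T -> -1 < alpha < 1 ->
  let mu := (@lebesgue_measure R) in
  let C : \bar R :=
    (\int[mu]_(eta in [set: R]) ((1 - cos eta) * powR `|eta| (alpha - 2))%:E)%E in
  let I (e : equation) : \bar R :=
    (\int[mu]_(t in `[0%R, T]%classic) \int[mu]_(xi in [set: R])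
        ((1 - cos (xi * h)) * `|FG e t xi| ^+ 2 * powR `|xi| alpha)%:E)%E in
  (I Wave <= C * (T * powR `|h| (1 - alpha))%:E)%E /\
  (I Heat <= C * (powR `|h| (1 - alpha))%:E)%E.
Proof.
(* [-1 < alpha] only makes [C] finite; the inequalities hold without it. *)
move=> T_gt0 /andP[_ alpha_lt1] mu C I.
have kernelE : (\int[mu]_xi (cos_kernel alpha h xi)%:E =
    (`|h| `^ (1 - alpha))%:E * C)%E.
  rewrite integral_cos_kernel_dilation //; congr (_ * _)%E.
  by apply: eq_integral => eta _; rewrite /cos_kernel mulr1.
split.
- apply: le_trans (integral_FG_increment_le alpha h T Wave T (ltW T_gt0) _) _.
    by move=> xi _; exact: integral_FG_wave_sqr_le.
  by rewrite kernelE muleA -EFinM muleC.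
- apply: le_trans (integral_FG_increment_le alpha h T Heat 1 ler01 _) _.
    by move=> xi xi0; rewrite mul1r; exact: integral_FG_heat_sqr_le.
  by rewrite kernelE mul1e muleC.
Qed.
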